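(* Let $\mathbf{E}\in\mathbb{K}^{m\times\sigma}$, $\mathbf{J}\in\mathbb{K}^{\sigma\times\sigma}$, $\mathbf{s}\in\mathbb{Z}^m$, and let $\boldsymbol{\delta}=(\delta_1,\dots,\delta_m)$ be the $\mathbf{s}$-minimal degree of $(\mathbf{E},\mathbf{J})$. Let $\delta=\lceil\sigma/m\rceil\ge1$; for $1\le i\le m$ write $\delta_i=(\alpha_i-1)\delta+\beta_i$ with $\alpha_i\ge1$ and $0\le\beta_i<\delta$, and let $\bar m=\alpha_1+\cdots+\alpha_m$. Define $\bar{\boldsymbol{\delta}}=(\underbrace{\delta,\dots,\delta,\beta_1}_{\alpha_1},\dots,\underbrace{\delta,\dots,\delta,\beta_m}_{\alpha_m})\in\mathbb{N}^{\bar m}$ and the block-diagonal matrix $\mathcal{E}\in\mathbb{K}[X]^{\bar m\times m}$ whose $i$-th diagonal block is the column $[1,X^{\delta},X^{2\delta},\dots,X^{(\alpha_i-1)\delta}]^{\mathsf T}$. Let $\mathbf{d}=-\bar{\boldsymbol{\delta}}\in\mathbb{Z}^{\bar m}$ and let $\mathbf{R}\in\mathbb{K}[X]^{\bar m\times\bar m}$ be a $\mathbf{d}$-minimal interpolation basis for $(\mathcal{E}\cdot\mathbf{E},\mathbf{J})$. Then the $\mathbf{s}$-Popov interpolation basis for $(\mathbf{E},\mathbf{J})$ is the submatrix of $\mathrm{lm}_{\mathbf{d}}(\mathbf{R})^{-1}\mathbf{R}\,\mathcal{E}$ formed by its rows at indices $\alpha_1+\cdots+\alpha_i$ for $1\le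 i\le m$.
   Context: For $p\in\mathbb{K}[X]$ and $\mathbf{e}\in\mathbb{K}^{1\times\sigma}$, $p\cdot\mathbf{e}=\mathbf{e}\,p(\mathbf{J})$; for a matrix $\mathbf{A}=[a_{ij}]\in\mathbb{K}[X]^{k\times m}$, $\mathbf{A}\cdot\mathbf{E}\in\mathbb{K}^{k\times\sigma}$ has $i$-th row $\sum_j a_{ij}\cdot\mathbf{e}_j$, $\mathbf{e}_j$ the rows of $\mathbf{E}$. An interpolant for $(\mathbf{E},\mathbf{J})$ is a row $\mathbf{p}$ with $\mathbf{p}\cdot\mathbf{E}=0$; an interpolation basis is a square matrix whose rows form a basis of the free module of interpolants. For a shift $\mathbf{s}$ (integer entries, possibly negative), the $\mathbf{s}$-degree of a nonzero row $[p_j]$ is $\max_j(\deg p_j+s_j)$; the $\mathbf{s}$-leading matrix $\mathrm{lm}_{\mathbf{s}}(\mathbf{P})$ of a full-rank $\mathbf{P}$ with row $\mathbf{s}$-degrees $d_i$ has $(i,j)$ entry the coefficient of degree $d_i-s_j$ of $p_{ij}$; $\mathbf{P}$ is $\mathbf{s}$-reduced if $\mathrm{lm}_{\mathbf{s}}(\mathbf{P})$ has full row rank; an $\mathbf{s}$-minimal interpolation basis is an $\mathbf{s}$-reduced interpolation basis. The $\mathbf{s}$-pivot index of a row is the largest $j$ attaining its $\mathbf{s}$-degree, $p_j$ its pivot entry. A nonsingular matrix is in $\mathbf{s}$-Popov form if its $\mathbf{s}$-pivot entries are monic and on the diagonal and in each column the nonpivot entries have degree less than the pivot entry. The $\mathbf{s}$-Popov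 interpolation basis is the unique interpolation basis in $\mathbf{s}$-Popov form; the $\mathbf{s}$-minimal degree is the tuple of degrees of its diagonal entries. *)

From HB Require Import structures.
From mathcomp Require Import all_boot all_order all_algebra.
Set Implicit Arguments. Unset Strict Implicit. Unset Printing Implicit Defensive.
Import Order.TTheory GRing.Theory Num.Theory.
Local Open Scope ring_scope.

Section Interp.
Variable K : fieldType.

Definition peval (sigma : nat) (p : {poly K}) (J : 'M[K]_sigma) : 'M[K]_sigma :=
  \sum_(l < size p) p`_l *: J ^+ l.

(* A . E : the i-th row is sum_j a_ij . e_j, where p . e = e p(J) *)
Definition pact (k m sigma : nat) (A : 'M[{poly K}]_(k, m)) (E : 'M[K]_(m, sigma))
    (J : 'M[K]_sigma) : 'M[K]_(k, sigma) :=
  \matrix_(i, c) (\sum_(j < m) (row j E *m peval (A i j) J)) 0 c.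

Definition interpolant (m sigma : nat) (E : 'M[K]_(m, sigma)) (J : 'M[K]_sigma)
    (p : 'rV[{poly K}]_m) : Prop := pact p E J = 0.

Definition is_interp_basis (m sigma : nat) (E : 'M[K]_(m, sigma)) (J : 'M[K]_sigma)
    (P : 'M[{poly K}]_m) : Prop :=
  [/\ forall i, interpolant E J (row i P),
      forall p, interpolant E J p -> exists u : 'rV[{poly K}]_m, p = u *m P
    & forall u : 'rV[{poly K}]_m, u *m P = 0 -> u = 0].

Definition sdeg_entry (m : nat) (s : 'I_m -> int) (p : 'rV[{poly K}]_m) (j : 'I_m) : int :=
  ((size (p 0 j)).-1)%:Z + s j.

Definition rdeg (m : nat) (s : 'I_m -> int) (p : 'rV[{poly K}]_m) : int :=
  match [pick j | p 0 j != 0] with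
  | Some j0 => \big[Num.max/ sdeg_entry s p j0]_(j | p 0 j != 0) sdeg_entry s p j
  | None => 0
  end.

Definition coefz (p : {poly K}) (k : int) : K :=
  match k with Posz n => p`_n | Negz _ => 0 end.

Definition lm (k m : nat) (s : 'I_m -> int) (P : 'M[{poly K}]_(k, m)) : 'M[K]_(k, m) :=
  \matrix_(i, j) coefz (P i j) (rdeg s (row i P) - s j).

Definition reduced (k m : nat) (s : 'I_m -> int) (P : 'M[{poly K}]_(k, m)) : bool :=
  row_free (lm s P).

Definition minimal_interp_basis (m sigma : nat) (s : 'I_m -> int)
    (E : 'M[K]_(m, sigma)) (J : 'M[K]_sigma) (P : 'M[{poly K}]_m) : Prop :=
  is_interp_basis E J P /\ reduced s P.

Definition is_pivot (m : nat) (s : 'I_m -> int) (p : 'rV[{poly K}]_m) (j : 'I_m) : bool :=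
  [&& p 0 j != 0, sdeg_entry s p j == rdeg s p &
      [forall k : 'I_m, (j < k)%N ==> ((p 0 k == 0) || (sdeg_entry s p k < rdeg s p))]].

Definition popov (m : nat) (s : 'I_m -> int) (P : 'M[{poly K}]_m) : Prop :=
  [/\ \det P != 0,
      forall i, is_pivot s (row i P) i,
      forall i, P i i \is monic
    & forall i j, i != j -> (size (P i j) < size (P j j))%N].

End Interp.

Section Construction.
Variables (m sigma : nat) (dlt : 'I_m -> nat).

(* delta = ceil(sigma / m) *)
Definition cdelta : nat := ((sigma + m).-1 %/ m)%N.
(* delta_i = (alpha_i - 1) delta + beta_i, alpha_i >= 1, 0 <= beta_i < delta *)
Definition alpha (i : 'I_m) : nat := (dlt i %/ cdelta).+1.
Definition beta (i : 'I_m) : nat := (dlt i %% cdelta)%N.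
Definition mbar : nat := (\sum_(i < m) alpha i)%N.
Definition aoff (i : 'I_m) : nat := (\sum_(j < m | (j < i)%N) alpha j)%N.
Definition inblock (i : 'I_m) (r : nat) : bool := (aoff i <= r < aoff i + alpha i)%N.

Definition dbar (r : 'I_mbar) : nat :=
  (\sum_(i < m | inblock i r) (if (r - aoff i).+1 < alpha i then cdelta else beta i))%N.

Definition Ecal (K : fieldType) : 'M[{poly K}]_(mbar, m) :=
  \matrix_(r, i) (if inblock i r then 'X^((r - aoff i) * cdelta) else 0).

Lemma last_row_lt (i : 'I_m) : ((aoff i + alpha i).-1 < mbar)%N.
Proof.
have Hle : (aoff i + alpha i <= mbar)%N.
  rewrite /mbar (bigID (fun j : 'I_m => (j < i)%N)) /= leq_add2l.
  by rewrite (bigD1 i) ?ltnn //= leq_addr.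
by rewrite prednK ?(leq_trans _ Hle) // addn_gt0 orbT.
Qed.

(* the row index alpha_1 + ... + alpha_i (1-based), i.e. 0-based last row of block i *)
Definition lastrow (i : 'I_m) : 'I_mbar := Ordinal (last_row_lt i).

End Construction.

From HB Require Import structures.
From mathcomp Require Import all_boot all_order all_algebra.
From mathcomp Require Import zify.
Set Implicit Arguments. Unset Strict Implicit. Unset Printing Implicit Defensive.
Import Order.TTheory GRing.Theory Num.Theory.
Local Open Scope ring_scope.

(* Cut every column j of the s-Popov basis P into alpha_j chunks
   of degree at most delta (the last one of degree at most beta_j).  This
   gives an mbar x mbar matrix Pbar whose rows are interpolants for
   (Ecal . E, J): the rows ending a block expand to the rows of P, the other
   ones are X^delta e_r - e_(r+1), which Ecal kills.  The coefficients of
   Pbar at the degrees dbar form a unit triangular matrix.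
   Consequently every d-minimal basis R has all its d-row degrees equal to 0:
   they are <= 0 because Pbar = V R and R has the predictable degree
   property, and >= 0 because a row of negative d-degree would expand to an
   interpolant of column degrees below delta, which vanishes by minimality of
   P.  Hence lm_d(R)^-1 R has, in every column c, coefficient exactly the
   identity in degree dbar_c and nothing above; the expansion of its row
   ending block i is then an interpolant with the same coefficients as row i
   of P in degrees >= delta_j, so their difference is zero. *)

Section PolynomialAction.
Variable K : fieldType.

Lemma peval_horner_mx n (p : {poly K}) (J : 'M[K]_n.+1) : peval p J = horner_mx J p.
Proof.
rewrite /horner_mx /horner_morph horner_coef size_map_inj_poly; last 2 first.
- by move=> a b /matrixP/(_ 0 0); rewrite !mxE !eqxx !mulr1n.
- by apply/matrixP => i j; rewrite !mxE mul0rn.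
by apply: eq_bigr => i _; rewrite coef_map /= -mulmxE mul_scalar_mx.
Qed.

Lemma row_pact k m sigma (A : 'M[{poly K}]_(k, m)) E (J : 'M[K]_sigma) i :
  row i (pact A E J) = \sum_(j < m) (row j E *m peval (A i j) J).
Proof. by apply/rowP => c; rewrite !mxE. Qed.

Lemma pactM k l m sigma (A : 'M[{poly K}]_(k, l)) (B : 'M[{poly K}]_(l, m)) E
    (J : 'M[K]_sigma) :
  pact (A *m B) E J = pact A (pact B E J) J.
Proof.
case: sigma E J => [|n] E J; first by rewrite !thinmx0.
apply/row_matrixP => i; rewrite !row_pact.
under eq_bigr do rewrite mxE peval_horner_mx rmorph_sum mulmx_sumr.
rewrite exchange_big /=; apply: eq_bigr => j _.
rewrite row_pact mulmx_suml; apply: eq_bigr => t _.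
by rewrite !peval_horner_mx rmorphM /= comm_horner_mx2 mulmxA.
Qed.

Lemma pactB k m sigma (A B : 'M[{poly K}]_(k, m)) E (J : 'M[K]_sigma) :
  pact (A - B) E J = pact A E J - pact B E J.
Proof.
case: sigma E J => [|n] E J; first by rewrite !thinmx0.
apply/row_matrixP => i; rewrite linearB /= !row_pact -sumrB /=.
by apply: eq_bigr => j _; rewrite !mxE !peval_horner_mx rmorphB mulmxBr.
Qed.

Lemma pact0l k m sigma E (J : 'M[K]_sigma) : pact (0 : 'M[{poly K}]_(k, m)) E J = 0.
Proof. by rewrite -(subrr 0) pactB subrr. Qed.

Lemma pact0r k m sigma (A : 'M[{poly K}]_(k, m)) (J : 'M[K]_sigma) : pact A 0 J = 0.
Proof.
apply/row_matrixP => i; rewrite row_pact row0 big1 // => j _.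
by rewrite row0 mul0mx.
Qed.

Lemma pact_row k m sigma (A : 'M[{poly K}]_(k, m)) E (J : 'M[K]_sigma) i :
  pact (row i A) E J = row i (pact A E J).
Proof.
transitivity (row 0 (pact (row i A) E J)); first by apply/rowP => c; rewrite [RHS]mxE.
by rewrite !row_pact; apply: eq_bigr => j _; rewrite mxE.
Qed.

Lemma interp_basis_pact0 m sigma (E : 'M[K]_(m, sigma)) J (P : 'M[{poly K}]_m) :
  is_interp_basis E J P -> pact P E J = 0.
Proof. by case=> Hint _ _; apply/row_matrixP => i; rewrite -pact_row Hint row0. Qed.

End PolynomialAction.

Section IntegerCoefficients.
Variable K : fieldType.

Lemma coefM_top (a b : {poly K}) (A B : nat) :
  (size a <= A.+1)%N -> (size b <= B.+1)%N -> (a * b)`_(A + B) = a`_A * b`_B.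
Proof.
move=> ha hb; rewrite coefM.
have hA : (A < (A + B).+1)%N by rewrite ltnS leq_addr.
rewrite (bigD1 (Ordinal hA)) //= addKn big1 ?addr0 // => i /eqP Hi.
have Hi' : (i != A :> nat) by apply/eqP => E; apply: Hi; apply: val_inj.
case: (ltngtP i A) => [lt|gt|eq]; last by move: Hi' eq; lia.
- by rewrite (leq_sizeP _ _ hb) ?mulr0 //; move: (ltn_ord i); lia.
- by rewrite (leq_sizeP _ _ ha) ?mul0r.
Qed.

Definition deg_le (p : {poly K}) (t : int) := forall x : nat, t < x%:Z -> p`_x = 0.

Lemma deg_le_lt0 (p : {poly K}) (t : int) : t < 0 -> deg_le p t -> p = 0.
Proof.
move=> ht hp; apply/polyP => x; rewrite coef0 hp //.
exact: lt_le_trans ht _.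
Qed.

Lemma deg_le_size (p : {poly K}) (t : int) : p != 0 -> (size p).-1%:Z <= t -> deg_le p t.
Proof.
move=> p0 hp x hx; apply: nth_default.
have : ((size p).-1%:Z < x%:Z) by apply: le_lt_trans hp hx.
have hs : (0 < size p)%N by rewrite size_poly_gt0.
by rewrite ltz_nat; case: (size p) hs.
Qed.

Lemma coefz0 t : coefz (0 : {poly K}) t = 0.
Proof. by case: t => [n|n] //=; rewrite coef0. Qed.

Lemma coefzM (a b : {poly K}) (A B : int) :
  deg_le a A -> deg_le b B -> coefz (a * b) (A + B) = coefz a A * coefz b B.
Proof.
move=> ha hb.
case: (ltP A 0) => hA0; first by rewrite (deg_le_lt0 hA0 ha) mul0r !coefz0 mul0r.
case: (ltP B 0) => hB0; first by rewrite (deg_le_lt0 hB0 hb) mulr0 !coefz0 mulr0.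
case: A hA0 ha => [A|//] _ ha; case: B hB0 hb => [B|//] _ hb /=.
apply: coefM_top; apply/leq_sizeP => j hj.
- by apply: ha; rewrite ltz_nat.
- by apply: hb; rewrite ltz_nat.
Qed.

Lemma coefz_sum (I : finType) (P : pred I) (F : I -> {poly K}) t :
  coefz (\sum_(i | P i) F i) t = \sum_(i | P i) coefz (F i) t.
Proof. by case: t => [n|n] /=; [rewrite coef_sum | rewrite big1]. Qed.

End IntegerCoefficients.

Section RowDegrees.
Variable K : fieldType.

Lemma sdeg_entry_le_rdeg m (s : 'I_m -> int) (p : 'rV[{poly K}]_m) j :
  p 0 j != 0 -> sdeg_entry s p j <= rdeg s p.
Proof.
move=> pj; rewrite /rdeg; case: pickP => [j0 Hj0|H]; last by rewrite H in pj.
by rewrite (bigD1 j) //= le_max lexx.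
Qed.

Lemma rdeg_attained m (s : 'I_m -> int) (p : 'rV[{poly K}]_m) :
  p != 0 -> exists2 j, p 0 j != 0 & sdeg_entry s p j = rdeg s p.
Proof.
move=> p0; rewrite /rdeg; case: pickP => [j0 Hj0|H]; last first.
  by case/eqP: p0; apply/rowP => j; move/negbT: (H j); rewrite negbK mxE => /eqP.
apply: (big_ind (fun v => exists2 j, p 0 j != 0 & sdeg_entry s p j = v)).
- by exists j0.
- by move=> x y [j1 h1 e1] [j2 h2 e2]; rewrite maxEle; case: ifP => _; [exists j2|exists j1].
- by move=> j hj; exists j.
Qed.

Lemma deg_le_rdeg m (s : 'I_m -> int) (P : 'M[{poly K}]_m) k c :
  deg_le (P k c) (rdeg s (row k P) - s c).
Proof.
have [->|hP] := eqVneq (P k c) 0; first by move=> x _; rewrite coef0.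
apply: deg_le_size => //; have hP' : row k P 0 c != 0 by rewrite mxE.
by have := sdeg_entry_le_rdeg s hP'; rewrite /sdeg_entry mxE lerBrDr.
Qed.

Lemma row_neq0_of_inj n m (R : 'M[{poly K}]_(n, m)) :
  (forall u : 'rV_n, u *m R = 0 -> u = 0) -> forall k, row k R != 0.
Proof.
move=> H k; apply/eqP => Hk.
have := H (delta_mx 0 k); rewrite -rowE => /(_ Hk) /matrixP /(_ 0 k).
by rewrite !mxE !eqxx /= => /eqP; rewrite oner_eq0.
Qed.

Lemma coefz_mulmx_lm n (d : 'I_n -> int) (R : 'M[{poly K}]_n) (u : 'rV_n) (t : int) :
  (forall k, deg_le (u 0 k) (t - rdeg d (row k R))) ->
  forall c, coefz ((u *m R) 0 c) (t - d c) =
    \sum_k coefz (u 0 k) (t - rdeg d (row k R)) * lm d R k c.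
Proof.
move=> hu c; rewrite !mxE coefz_sum; apply: eq_bigr => k _; rewrite !mxE.
have -> : t - d c = (t - rdeg d (row k R)) + (rdeg d (row k R) - d c).
  by rewrite addrA subrK.
by rewrite (coefzM (hu k) (@deg_le_rdeg _ d R k c)).
Qed.

(* A form of the predictable degree property of d-reduced matrices. *)
Lemma predictable_degree_le0 n (d : 'I_n -> int) (R : 'M[{poly K}]_n) (u : 'rV_n) :
  row_free (lm d R) -> (forall k, row k R != 0) ->
  (forall c (x : nat), 0 < x%:Z + d c -> ((u *m R) 0 c)`_x = 0) ->
  forall k, u 0 k != 0 -> (size (u 0 k)).-1%:Z + rdeg d (row k R) <= 0.
Proof.
move=> Lfree Rnz Hg k uk; rewrite leNgt; apply/negP => Hpos.
pose r k := rdeg d (row k R); pose t := rdeg r u.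
have u0 : u != 0 by apply: contraNneq uk => ->; rewrite mxE.
have tge k' : u 0 k' != 0 -> (size (u 0 k')).-1%:Z + r k' <= t.
  exact: sdeg_entry_le_rdeg.
have tpos : 0 < t by apply: lt_le_trans Hpos (tge _ uk).
have hu k' : deg_le (u 0 k') (t - r k').
  have [->|hk'] := eqVneq (u 0 k') 0; first by move=> x _; rewrite coef0.
  by apply: deg_le_size => //; rewrite lerBrDr tge.
pose c := \row_k coefz (u 0 k) (t - r k).
have c0 : c != 0.
  have [k1 hk1 ek1] := rdeg_attained r u0.
  apply/eqP => /rowP /(_ k1); rewrite !mxE.
  have -> : t - r k1 = (size (u 0 k1)).-1%:Z by rewrite /t -ek1 /sdeg_entry addrK.
  by move=> /= /eqP; rewrite -lead_coefE lead_coef_eq0; exact/negP.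
have /matrix0Pn [i [j]] : c *m lm d R != 0 by rewrite mulmx_free_eq0.
have -> : (c *m lm d R) i j = coefz ((u *m R) 0 j) (t - d j).
  by rewrite (ord1 i) coefz_mulmx_lm // mxE; apply: eq_bigr => k' _; rewrite mxE.
case E: (t - d j) => [x|x] /=; last by rewrite eqxx.
by rewrite Hg ?eqxx // -(E : _ = Posz x) subrK.
Qed.

Lemma rdeg_le0_of_factor n (d : 'I_n -> int) (R V : 'M[{poly K}]_n) :
  row_free (lm d R) -> (forall k, row k R != 0) ->
  (forall l c (x : nat), 0 < x%:Z + d c -> ((V *m R) l c)`_x = 0) ->
  \matrix_(l, c) coefz ((V *m R) l c) (- d c) \in unitmx ->
  forall k, rdeg d (row k R) <= 0.
Proof.
move=> Lfree Rnz HG Gunit k.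
pose rr k := rdeg d (row k R).
have Vdeg l k' : deg_le (V l k') (0 - rr k').
  have [->|hv] := eqVneq (V l k') 0; first by move=> x _; rewrite coef0.
  have hpd : (size (V l k')).-1%:Z + rr k' <= 0.
    have := @predictable_degree_le0 _ d R (row l V) Lfree Rnz _ k'.
    by rewrite mxE; apply=> // c x hx; rewrite -row_mul mxE HG.
  by apply: deg_le_size => //; move: hpd; rewrite /rr; lia.
pose C := \matrix_(l, k) coefz (V l k) (0 - rr k).
have HC : \matrix_(l, c) coefz ((V *m R) l c) (- d c) = C *m lm d R.
  apply/matrixP => l c; rewrite [LHS]mxE -sub0r.
  have -> : (V *m R) l c = (row l V *m R) 0 c by rewrite -row_mul [RHS]mxE.
  rewrite (@coefz_mulmx_lm _ d R (row l V) 0) => [|k']; last by rewrite mxE.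
  by rewrite mxE; apply: eq_bigr => k' _; rewrite !mxE.
have Cunit : C \in unitmx by move: Gunit; rewrite HC unitmx_mul => /andP[].
have [l hl] : exists l, C l k != 0.
  case: (pickP (fun l => C l k != 0)) => [l hl|H0]; first by exists l.
  have := mulVmx Cunit; move/matrixP/(_ k k); rewrite !mxE eqxx /= big1.
    by move/eqP; rewrite eq_sym oner_eq0.
  by move=> l _; move/negbT: (H0 l) => /negbNE /eqP ->; rewrite mulr0.
move: hl; rewrite mxE; case E0: (0 - rr k) => [x|x] /=; last by rewrite eqxx.
move=> _; have : 0 <= 0 - rr k by rewrite E0.
by rewrite /rr; lia.
Qed.

End RowDegrees.

Section Blocks.
Variables (m sigma : nat) (dlt : 'I_m -> nat).
Local Notation D := (cdelta m sigma).
Local Notation mb := (mbar sigma dlt).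
Local Notation al := (alpha sigma dlt).

(* A row index r < mbar is the pair (blk r, bpos r) of a block and a position
   inside it; [brank] is the inverse bijection. *)
Definition blk (r : 'I_mb) : 'I_m := @tagnat.sig1 m al r.
Definition bpos (r : 'I_mb) : 'I_(al (blk r)) := @tagnat.sig2 m al r.
Definition brank (i : 'I_m) (k : 'I_(al i)) : 'I_mb := @tagnat.Rank m al i k.
Arguments brank : clear implicits.

Definition nonlast (r : 'I_mb) : bool := ((bpos r).+1 < al (blk r))%N.

Lemma bposE (r : 'I_mb) : (r : nat) = (aoff sigma dlt (blk r) + bpos r)%N.
Proof. exact: tagnat.rect. Qed.

Lemma brankE i k : (brank i k : nat) = (aoff sigma dlt i + k)%N.
Proof. exact: tagnat.RankEsum. Qed.

Lemma blk_brank i k : blk (brank i k) = i.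
Proof. exact: tagnat.Rank1K. Qed.

Lemma bpos_brank i k : (bpos (brank i k) : nat) = k.
Proof. by rewrite /bpos /brank tagnat.Rank2K. Qed.

Lemma brank_bpos r : brank (blk r) (bpos r) = r.
Proof. exact: tagnat.sig2K. Qed.

Lemma eq_brank i i' k k' : (brank i k == brank i' k') = (i == i') && (k == k' :> nat).
Proof. by rewrite -val_eqE /brank tagnat.eq_Rank. Qed.

Lemma eq_brank_r j (k : 'I_(al j)) (r : 'I_mb) :
  (brank j k == r) = (j == blk r) && (k == bpos r :> nat).
Proof. by have := eq_brank k (bpos r); rewrite brank_bpos. Qed.

Lemma eq_brank_rS j (k : 'I_(al j)) (r : 'I_mb) : nonlast r ->
  ((brank j k : nat) == r.+1) = (j == blk r) && (k == (bpos r).+1 :> nat).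
Proof.
move=> hr; have -> : r.+1 = brank (blk r) (Ordinal hr) :> nat.
  by rewrite brankE bposE addnS.
exact: (eq_brank k (Ordinal hr)).
Qed.

Lemma inblockE i (r : 'I_mb) : inblock sigma dlt i r = (blk r == i).
Proof.
rewrite /inblock; apply/idP/eqP => [/andP [h1 h2]|<-]; last first.
  by rewrite bposE leq_addr /= ltn_add2l.
have hk : (r - aoff sigma dlt i < al i)%N by lia.
have -> : r = brank i (Ordinal hk) by apply: ord_inj; rewrite brankE subnKC.
by rewrite blk_brank.
Qed.

Lemma nonlast_brank i (k : 'I_(al i)) : nonlast (brank i k) = (k.+1 < al i)%N.
Proof. by rewrite /nonlast bpos_brank blk_brank. Qed.

Lemma bpos_last (r : 'I_mb) : ~~ nonlast r -> (bpos r : nat) = (al (blk r)).-1.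
Proof. by rewrite /nonlast -leqNgt => h; have := ltn_ord (bpos r); lia. Qed.

Definition lastpos (i : 'I_m) : 'I_(al i) := Ordinal (ltnSn (dlt i %/ D)).

Lemma lastrowE i : lastrow sigma dlt i = brank i (lastpos i).
Proof. by apply: ord_inj; rewrite brankE /= /alpha addnS. Qed.

Lemma eq_lastrow i j : (lastrow sigma dlt i == lastrow sigma dlt j) = (i == j).
Proof. by rewrite !lastrowE eq_brank; case: eqVneq => //= ->; rewrite eqxx. Qed.

Lemma dbarE r : dbar r = if nonlast r then D else beta sigma dlt (blk r).
Proof.
rewrite /dbar (eq_bigl (pred1 (blk r))); last by move=> i; rewrite inblockE eq_sym.
by rewrite big_pred1_eq bposE addKn.
Qed.

Lemma dbar_brank i (k : 'I_(al i)) :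
  dbar (brank i k) = if (k.+1 < al i)%N then D else beta sigma dlt i.
Proof. by rewrite dbarE nonlast_brank blk_brank. Qed.

Lemma dbar_lastrow j : dbar (lastrow sigma dlt j) = beta sigma dlt j.
Proof. by rewrite lastrowE dbar_brank /= ltnn. Qed.

Lemma EcalE (K : fieldType) r i :
  Ecal sigma dlt K r i = if blk r == i then 'X^(bpos r * D) else 0.
Proof. by rewrite mxE inblockE; case: eqP => // <-; rewrite bposE addKn. Qed.

Lemma sum_blocks (V : nmodType) (F : 'I_mb -> V) :
  \sum_(r : 'I_mb) F r = \sum_(i < m) \sum_(k < al i) F (brank i k).
Proof.
rewrite sig_big_dep /= (reindex (@tagnat.rank m al)) /=.
  by apply: eq_bigr => -[i k] _; rewrite tagnat.rankE.
exact: tagnat.rank_bij_on.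
Qed.

Lemma mulEcal (K : fieldType) (w : 'rV[{poly K}]_mb) j :
  (w *m Ecal sigma dlt K) 0 j = \sum_(k < al j) w 0 (brank j k) * 'X^(k * D).
Proof.
rewrite mxE sum_blocks (bigD1 j) //= [X in _ + X]big1 ?addr0.
  by apply: eq_bigr => k _; rewrite EcalE bpos_brank blk_brank eqxx.
move=> i /negbTE hi; rewrite big1 // => k _.
by rewrite EcalE bpos_brank blk_brank hi mulr0.
Qed.

End Blocks.
Arguments brank {m sigma dlt} i k.

Section Expansion.
Variables (K : fieldType) (m sigma : nat) (dlt : 'I_m -> nat).
Local Notation D := (cdelta m sigma).
Local Notation mb := (mbar sigma dlt).
Local Notation al := (alpha sigma dlt).
Local Notation beta := (beta sigma dlt).
Local Notation Ec := (Ecal sigma dlt K).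
Hypothesis D_gt0 : (0 < D)%N.

Lemma dlt_divE j : dlt j = (dlt j %/ D * D + beta j)%N.
Proof. exact: divn_eq. Qed.

Lemma dbar_leD (r : 'I_mb) : (dbar r <= D)%N.
Proof. by rewrite dbarE; case: ifP => // _; apply/ltnW/ltn_pmod. Qed.

Lemma drop_poly_drop n n' (p : {poly K}) :
  drop_poly n (drop_poly n' p) = drop_poly (n + n') p.
Proof. by apply/polyP => i; rewrite !coef_drop_poly addnA. Qed.

Lemma sum_take_drop_poly n (p : {poly K}) :
  \sum_(k < n) take_poly D (drop_poly (k * D) p) * 'X^(k * D)
    + drop_poly (n * D) p * 'X^(n * D) = p.
Proof.
elim: n => [|n IH]; first by rewrite big_ord0 add0r mul0n expr0 mulr1 drop_poly0l.
rewrite big_ord_recr /= -addrA -{}[RHS]IH; congr (_ + _).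
rewrite -[in RHS](poly_take_drop D (drop_poly (n * D) p)) drop_poly_drop -mulSn.
by rewrite mulrDl -mulrA -exprD mulSn addnC.
Qed.

Definition chunk (j : 'I_m) (p : {poly K}) (k : nat) : {poly K} :=
  if (k.+1 < al j)%N then take_poly D (drop_poly (k * D) p)
  else drop_poly ((al j).-1 * D) p.

Lemma sum_chunk j p : \sum_(k < al j) chunk j p k * 'X^(k * D) = p.
Proof.
rewrite big_ord_recr /= -[RHS](sum_take_drop_poly (al j).-1); congr (_ + _).
  by apply: eq_bigr => k _; rewrite /chunk /alpha ltnS ltn_ord.
by rewrite /chunk /alpha ltnn.
Qed.

Lemma size_chunk j (p : {poly K}) (k : nat) : (size p <= (dlt j).+1)%N ->
  (size (chunk j p k) <= (if (k.+1 < al j)%N then D else beta j).+1)%N.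
Proof.
move=> hp; rewrite /chunk; case: ifP => _; first exact/leqW/size_take_poly.
apply/leq_sizeP => b hb; rewrite coef_drop_poly; apply: (leq_sizeP _ _ hp).
by move: hb (dlt_divE j); rewrite /alpha /=; lia.
Qed.

Lemma coef_chunkD j p (k : nat) : (k.+1 < al j)%N -> (chunk j p k)`_D = 0.
Proof. by rewrite /chunk => ->; rewrite coef_take_poly ltnn. Qed.

Lemma coef_chunk_last j p : (chunk j p (al j).-1)`_(beta j) = p`_(dlt j).
Proof. by rewrite /chunk prednK // ltnn coef_drop_poly (dlt_divE j) addnC. Qed.

(* Above degree delta_j, the expansion w Ecal only sees the last chunk. *)
Lemma coef_mulEcal_top (w : 'rV[{poly K}]_mb) j :
  (forall k : 'I_(al j), (k.+1 < al j)%N -> forall x, (D <= x)%N ->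
     (w 0 (brank j k))`_x = 0) ->
  forall n, (dlt j <= n)%N ->
  ((w *m Ec) 0 j)`_n = (w 0 (lastrow sigma dlt j))`_(n - dlt j %/ D * D).
Proof.
move=> Hw n hn; rewrite mulEcal coef_sum big_ord_recr /= big1 ?add0r.
  rewrite coefMXn ifF ?lastrowE //; apply/negbTE; rewrite -leqNgt.
  by move: hn (dlt_divE j); lia.
move=> k _; rewrite coefMXn; case: ifP => // h.
have hk : ((widen_ord (leqnSn _) k).+1 < al j)%N by rewrite ltnS /=.
rewrite (Hw _ hk) ?mul0r //=.
have : (k.+1 * D <= dlt j %/ D * D)%N by rewrite leq_mul2r ltn_ord orbT.
by move: hn (dlt_divE j); rewrite mulSn; lia.
Qed.

Lemma coef_mulEcal_small (w : 'rV[{poly K}]_mb) j :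
  (forall k : 'I_(al j), forall x, (dbar (brank j k) <= x)%N -> (w 0 (brank j k))`_x = 0) ->
  forall n, (dlt j <= n)%N -> ((w *m Ec) 0 j)`_n = 0.
Proof.
move=> Hw n hn; rewrite coef_mulEcal_top //.
  rewrite lastrowE Hw // dbar_brank /= ltnn.
  by move: hn (dlt_divE j); lia.
by move=> k hk x hx; rewrite Hw // dbar_brank hk.
Qed.

(* Under these degree bounds the chunks occupy disjoint ranges of degrees. *)
Lemma mulEcal_inj (w : 'rV[{poly K}]_mb) :
  (forall c x, (dbar c <= x)%N -> (w 0 c)`_x = 0) -> w *m Ec = 0 -> w = 0.
Proof.
move=> Hw Hz; apply/rowP => c; rewrite [RHS]mxE; apply/polyP => a; rewrite coef0.
case: (ltnP a (dbar c)) => ha; last exact: Hw.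
rewrite -(brank_bpos c) in ha *; move: (blk c) (bpos c) ha => j k ha.
have : ((w *m Ec) 0 j)`_(k * D + a) = 0 by rewrite Hz mxE coef0.
rewrite mulEcal coef_sum (bigD1 k) //= big1 ?addr0.
  by rewrite coefMXn ltnNge leq_addr /= addKn.
move=> k' hk'; rewrite coefMXn; case: ifP => // h.
have hD := dbar_leD (brank j k).
have hlt : (k' < k)%N.
  have : (k' : nat) != k by apply: contraNneq hk' => e; apply/eqP/ord_inj.
  case: (ltngtP k' k) => // hgt _.
  have : (k.+1 * D <= k' * D)%N by rewrite leq_mul2r hgt orbT.
  by move/negbT: h; rewrite -leqNgt mulSn; lia.
have hnl : (k'.+1 < al j)%N by apply: leq_trans (ltn_ord k).
rewrite Hw ?mul0r // dbar_brank hnl.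
have : (k'.+1 * D <= k * D)%N by rewrite leq_mul2r hlt orbT.
by rewrite mulSn; lia.
Qed.

End Expansion.

Section PopovExpansion.
Variables (K : fieldType) (m sigma : nat) (E : 'M[K]_(m, sigma)) (J : 'M[K]_sigma).
Variables (s : 'I_m -> int) (P : 'M[{poly K}]_m).
Hypotheses (HP : is_interp_basis E J P) (HPpop : popov s P).
Let dlt i := (size (P i i)).-1.
Local Notation D := (cdelta m sigma).
Local Notation mb := (mbar sigma dlt).
Local Notation al := (alpha sigma dlt).
Local Notation Ec := (Ecal sigma dlt K).
Hypothesis D_gt0 : (0 < D)%N.

Lemma size_Pdiag i : size (P i i) = (dlt i).+1.
Proof.
by case: HPpop => _ _ Hmon _; rewrite /dlt prednK // size_poly_gt0 monic_neq0.
Qed.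

Lemma size_P_le i j : (size (P i j) <= (dlt j).+1)%N.
Proof.
have [->|hij] := eqVneq i j; first by rewrite size_Pdiag.
by case: HPpop => _ _ _ /(_ _ _ hij); rewrite size_Pdiag => /ltnW.
Qed.

Lemma coef_P_dlt i j : (P i j)`_(dlt j) = (i == j)%:R.
Proof.
have [<-|hij] := eqVneq i j.
  by case: HPpop => _ _ /(_ i) /monicP; rewrite lead_coefE.
case: HPpop => _ _ _ /(_ _ _ hij); rewrite size_Pdiag ltnS => h.
exact: (leq_sizeP _ _ h).
Qed.

(* Minimality of the s-Popov basis: u P has degree >= delta_j in the column j
   where u attains its (unshifted) degree, with the leading coefficient of u. *)
Lemma small_interpolant_eq0 (w : 'rV[{poly K}]_m) :
  interpolant E J w -> (forall j, (size (w 0%R j) <= dlt j)%N) -> w = 0.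
Proof.
case: HP => _ Hgen _ /Hgen [u ->] Hsz.
have [->|u0] := eqVneq u 0; first by rewrite mul0mx.
have [j0 hj0 ej0] := rdeg_attained (fun _ => 0) u0.
pose T := (size (u 0 j0)).-1.
have hu i : (size (u 0%R i) <= T.+1)%N.
  have [->|hi] := eqVneq (u 0 i) 0; first by rewrite size_poly0.
  have := sdeg_entry_le_rdeg (fun _ => 0) hi; rewrite -ej0 /sdeg_entry !addr0 lez_nat.
  by have := size_poly_gt0 (u 0 i); rewrite hi; case: (size (u 0 i)).
have := Hsz j0; move/leq_sizeP => /(_ (T + dlt j0)%N (leq_addl _ _)).
rewrite mxE coef_sum (bigD1 j0) //= big1 ?addr0; last first.
  by move=> i hi; rewrite coefM_top ?hu ?size_P_le // coef_P_dlt (negbTE hi) mulr0.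
rewrite coefM_top ?hu ?size_P_le // coef_P_dlt eqxx mulr1 => /eqP.
by rewrite /T -lead_coefE lead_coef_eq0 (negbTE hj0).
Qed.

(* A row r that does not end a block is X^delta e_r - e_(r+1), in the kernel
   of Ecal. *)
Definition Pbar : 'M[{poly K}]_mb := \matrix_(r, c)
  if nonlast r then (if c == r then 'X^D else if (c : nat) == r.+1 then -1 else 0)
  else chunk sigma dlt (blk c) (P (blk r) (blk c)) (bpos c).

Lemma mulEcal_Pbar_nonlast r : nonlast r -> row r Pbar *m Ec = 0.
Proof.
move=> hr; apply/rowP => j; rewrite mulEcal mxE.
under eq_bigr do rewrite !mxE hr eq_brank_r eq_brank_rS //.
have [->|hj] := eqVneq j (blk r); last by rewrite big1 // => k _; rewrite mul0r.
rewrite (bigD1 (bpos r)) //= eqxx /= (bigD1 (Ordinal hr)) /=; last first.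
  by rewrite -val_eqE /= neq_ltn ltnSn orbT.
rewrite (gtn_eqF (ltnSn _)) eqxx [X in _ + (_ + X)]big1 ?addr0; last first.
  move=> k /andP [h1 h2]; rewrite ifF; last exact: negbTE h1.
  by rewrite ifF ?mul0r //; exact: negbTE h2.
by rewrite -exprD mulSn mulN1r addrN.
Qed.

Lemma mulEcal_Pbar_last r : ~~ nonlast r -> row r Pbar *m Ec = row (blk r) P.
Proof.
move=> hr; apply/rowP => j; rewrite mulEcal [RHS]mxE -[RHS](sum_chunk sigma dlt j).
by apply: eq_bigr => k _; rewrite !mxE (negbTE hr) bpos_brank blk_brank.
Qed.

Lemma interpolant_Pbar r : interpolant (pact Ec E J) J (row r Pbar).
Proof.
rewrite /interpolant -pactM; case: (boolP (nonlast r)) => hr.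
  by rewrite mulEcal_Pbar_nonlast // pact0l.
by rewrite mulEcal_Pbar_last //; case: HP => /(_ (blk r)).
Qed.

Lemma size_Pbar r c : (size (Pbar r c) <= (dbar c).+1)%N.
Proof.
rewrite mxE dbarE; case: ifP => hr; last exact/size_chunk/size_P_le.
case: eqP => [->|_]; first by rewrite size_polyXn hr.
by case: eqP => _; rewrite ?size_polyN ?size_poly1 ?size_poly0.
Qed.

Definition Pbar_top : 'M[K]_mb := \matrix_(r, c) (Pbar r c)`_(dbar c).

Lemma Pbar_top_diag r : Pbar_top r r = 1.
Proof.
rewrite !mxE dbarE; case: ifP => hr; first by rewrite eqxx coefXn eqxx.
by rewrite bpos_last ?hr // coef_chunk_last coef_P_dlt eqxx.
Qed.

Lemma Pbar_top_lt (r c : 'I_mb) : (c < r)%N -> Pbar_top r c = 0.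
Proof.
move=> hcr; rewrite !mxE; case: ifP => hr.
  rewrite ifF; last by apply/negbTE; rewrite neq_ltn hcr.
  by rewrite ifF ?coef0 //; apply/negbTE; rewrite neq_ltn ltnS ltnW.
rewrite dbarE; case: (boolP (nonlast c)) => hc; first exact: coef_chunkD.
rewrite bpos_last // coef_chunk_last coef_P_dlt.
case: eqP => // eb; suff erc : r = c by rewrite erc ltnn in hcr.
rewrite -(brank_bpos r) -(brank_bpos c); apply/eqP; rewrite eq_brank.
by apply/andP; split; [apply/eqP | rewrite !bpos_last ?hr // eb].
Qed.

Lemma Pbar_top_unit : Pbar_top \in unitmx.
Proof.
rewrite unitmxE -det_tr det_trig.
  by rewrite big1 ?unitr1 // => i _; rewrite mxE Pbar_top_diag.
by apply/is_trig_mxP => i j hij; rewrite mxE Pbar_top_lt.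
Qed.

Local Notation d := (fun r : 'I_mb => - (dbar r)%:Z).

Variable R : 'M[{poly K}]_mb.
Hypothesis HR : minimal_interp_basis d (pact Ec E J) J R.

Lemma row_R_neq0 k : row k R != 0.
Proof. by apply: row_neq0_of_inj; case: HR => -[]. Qed.

Lemma interpolant_mulR_Ecal (u : 'rV_mb) : interpolant E J (u *m R *m Ec).
Proof.
by rewrite /interpolant !pactM (interp_basis_pact0 (proj1 HR)) pact0r.
Qed.

Lemma coef_R_ge (k c : 'I_mb) (x : nat) :
  rdeg d (row k R) + (dbar c)%:Z < x%:Z -> (R k c)`_x = 0.
Proof. by move=> hx; apply: (@deg_le_rdeg K _ d R k c); rewrite /= opprK. Qed.

Lemma rdeg_R_ge0 k : 0 <= rdeg d (row k R).
Proof.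
rewrite leNgt; apply/negP => hneg.
have Hw c x : (dbar c <= x)%N -> (row k R 0 c)`_x = 0.
  by move=> hx; rewrite mxE coef_R_ge //; move: hx hneg; rewrite -lez_nat; lia.
have : row k R *m Ec = 0.
  apply: small_interpolant_eq0; first by rewrite rowE; apply: interpolant_mulR_Ecal.
  by move=> j; apply/leq_sizeP => n hn; apply: coef_mulEcal_small => // k' x; apply: Hw.
by move/(mulEcal_inj D_gt0 Hw)/eqP; rewrite (negbTE (row_R_neq0 k)).
Qed.

Lemma rdeg_R_le0 k : rdeg d (row k R) <= 0.
Proof.
have [V HV] : exists V : 'M_mb, Pbar = V *m R.
  have hrows l : exists v : 'rV_mb, row l Pbar = v *m R.
    by case: HR => -[_ Rgen _] _; apply/Rgen/interpolant_Pbar.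
  have [f hf] := fin_all_exists hrows.
  by exists (\matrix_l f l); apply/row_matrixP => l; rewrite row_mul rowK hf.
apply: (@rdeg_le0_of_factor _ _ d R V _ row_R_neq0); rewrite -?HV.
- by case: HR.
- move=> l c x hx; apply: (leq_sizeP _ _ (size_Pbar l c)).
  by move: hx; rewrite -ltz_nat; lia.
- suff -> : \matrix_(l, c) coefz (Pbar l c) (- - (dbar c)%:Z) = Pbar_top.
    exact: Pbar_top_unit.
  by apply/matrixP => l c; rewrite [LHS]mxE [RHS]mxE opprK.
Qed.

Lemma rdeg_R k : rdeg d (row k R) = 0.
Proof. by apply/eqP; rewrite eq_le rdeg_R_le0 rdeg_R_ge0. Qed.

Local Notation Rn := (map_mx polyC (invmx (lm d R)) *m R).

Lemma coef_Rn l c x : (Rn l c)`_x = \sum_k invmx (lm d R) l k * (R k c)`_x.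
Proof. by rewrite mxE coef_sum; apply: eq_bigr => k _; rewrite mxE coefCM. Qed.

Lemma coef_Rn_gt l c x : (dbar c < x)%N -> (Rn l c)`_x = 0.
Proof.
move=> hx; rewrite coef_Rn big1 // => k _.
by rewrite coef_R_ge ?mulr0 // rdeg_R add0r ltz_nat.
Qed.

Lemma coef_Rn_dbar l c : (Rn l c)`_(dbar c) = (l == c)%:R.
Proof.
have Lu : lm d R \in unitmx by rewrite -row_free_unit; case: HR.
rewrite coef_Rn; have := mulVmx Lu; move/matrixP/(_ l c); rewrite !mxE => <-.
by apply: eq_bigr => k _; rewrite !mxE rdeg_R sub0r opprK.
Qed.

(* Both sides are interpolants with the same coefficients in each column j
   in degrees >= delta_j, so their difference vanishes by minimality of P. *)
Lemma mulEcal_Rn_lastrow i : row (lastrow sigma dlt i) Rn *m Ec = row i P.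
Proof.
apply/eqP; rewrite -subr_eq0; apply/eqP; apply: small_interpolant_eq0.
  rewrite /interpolant pactB row_mul interpolant_mulR_Ecal.
  by case: HP => /(_ i) -> _ _; rewrite subrr.
move=> j; apply/leq_sizeP => n hn.
have -> : (row (lastrow sigma dlt i) Rn *m Ec - row i P) 0 j
          = (row (lastrow sigma dlt i) Rn *m Ec) 0 j - P i j by rewrite !mxE.
rewrite coefB.
rewrite coef_mulEcal_top //; last first.
  move=> k hk x hx; rewrite mxE.
  move: hx; rewrite leq_eqVlt => /orP [/eqP <-|hlt]; last by rewrite coef_Rn_gt // dbar_brank hk.
  have -> : D = dbar (brank j k) by rewrite dbar_brank hk.
  rewrite coef_Rn_dbar lastrowE eq_brank.
  case: eqVneq => //= eij; subst j.
  by rewrite (_ : (_ == _) = false) //; apply/negbTE; move: hk; rewrite /alpha; lia.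
rewrite mxE; move: hn; rewrite leq_eqVlt => /orP [/eqP hn|hn].
  rewrite -hn {1}(dlt_divE sigma dlt j) addKn -(dbar_lastrow sigma dlt j) coef_Rn_dbar.
  by rewrite coef_P_dlt eq_lastrow subrr.
rewrite coef_Rn_gt; last by move: hn (dlt_divE sigma dlt j); rewrite dbar_lastrow; lia.
by rewrite (leq_sizeP _ _ (size_P_le i j)) // subrr.
Qed.

End PopovExpansion.

Theorem lemma4p2 (K : fieldType) (m sigma : nat)
    (E : 'M[K]_(m, sigma)) (J : 'M[K]_sigma) (s : 'I_m -> int)
    (P : 'M[{poly K}]_m)
    (HP : is_interp_basis E J P) (HPpop : popov s P) :
  let dlt := fun i : 'I_m => (size (P i i)).-1 in
  (0 < cdelta m sigma)%N ->
  let d := fun r : 'I_(mbar sigma dlt) => - (@dbar m sigma dlt r)%:Z in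
  forall R : 'M[{poly K}]_(mbar sigma dlt),
    minimal_interp_basis d (pact (Ecal sigma dlt K) E J) J R ->
    P = \matrix_(i, j)
          ((map_mx polyC (invmx (lm d R)) *m R *m Ecal sigma dlt K) (lastrow sigma dlt i) j).
Proof.
move=> dlt D_gt0 d R HR; apply/matrixP => i j; rewrite [RHS]mxE.
transitivity (row i P 0 j); first by rewrite mxE.
by rewrite -(mulEcal_Rn_lastrow HP HPpop D_gt0 HR) -row_mul mxE.
Qed.
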